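(* For every fixed $y\in\mathbb R^{|\mathcal S^{\mathrm h}|\cdot|\Omega|}$ (held constant), the ODE $\frac{dx}{dt}=h(x(t),y)$ on $\mathbb R^{|\mathcal S^{\mathrm l}|\cdot|\mathcal A|}$ has a globally asymptotically stable equilibrium $\lambda(y)$. Moreover, the map $y\mapsto\lambda(y)$ is Lipschitz.
   Context: $\mathcal S,\mathcal A$ are finite sets, $P(s'|s,a)$ a transition kernel on $\mathcal S$, $T\ge1$ an integer, $\Omega=\mathcal S$, $\mathcal S^{\mathrm{de}}=\{0,\dots,T-1\}$ with deterministic kernel $P^{\mathrm{de}}(d'|d)=1$ iff $d'=d+1$ for $d\ne T-1$ and $d'=0$ for $d=T-1$. $\mathcal S^{\mathrm h}=\mathcal S$, $\mathcal S^{\mathrm l}=\mathcal S\times\Omega\times\mathcal S^{\mathrm{de}}$. $r^{\mathrm l}:\mathcal S^{\mathrm l}\times\mathcal A\to\mathbb R$ is bounded, $\gamma^{\mathrm l}\in(0,1)$. Given a high-level policy $\pi^{\mathrm h}(\omega|s)$, the low-level kernel is $P^{\mathrm l}_{\pi^{\mathrm h}}((s',\omega',d')|(s,\omega,d),a)=P^{\mathrm{de}}(d'|d)P(s'|s,a)q$ with $q=0$ if $d\ne T-1,\omega'\ne\omega$; $q=1$ if $d\ne T-1,\omega'=\omega$; $q=\pi^{\mathrm h}(\omega'|s)$ if $d=T-1$. The high-level policy is obtained from a high-level Q-table $Q^{\mathrm h}\in\mathbb R^{|\mathcal S^{\mathrm h}|\times|\Omega|}$ by a policy extraction map $\pi^{\mathrm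 h}=\mathcal F^{\mathrm h}(Q^{\mathrm h})$ that is Lipschitz in the infinity norm. Write $x=\mathrm{vec}(Q^{\mathrm l})$ for $Q^{\mathrm l}\in\mathbb R^{|\mathcal S^{\mathrm l}|\times|\mathcal A|}$ and $y=\mathrm{vec}(Q^{\mathrm h})$. The vector field $h$ has components $h_{s^{\mathrm l},a}(x,y)=r^{\mathrm l}(s^{\mathrm l},a)+\gamma^{\mathrm l}\sum_{s^{\mathrm l,+}}P^{\mathrm l}_{\pi^{\mathrm h}}(s^{\mathrm l,+}|s^{\mathrm l},a)\max_{a^+}Q^{\mathrm l}(s^{\mathrm l,+},a^+)-Q^{\mathrm l}(s^{\mathrm l},a)$, with $\pi^{\mathrm h}=\mathcal F^{\mathrm h}(Q^{\mathrm h})$. *)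

From HB Require Import structures.
From mathcomp Require Import all_boot all_order all_algebra.
From mathcomp Require Import all_classical all_reals all_analysis.
Set Implicit Arguments. Unset Strict Implicit. Unset Printing Implicit Defensive.
Import Order.TTheory GRing.Theory Num.Theory.
Import numFieldNormedType.Exports.
Local Open Scope ring_scope.
Local Open Scope classical_set_scope.

Section HRL.
Variable R : realType.

Definition supn (X : finType) (f : X -> R) : R := \big[Num.max/0]_(i : X) `|f i|.

(* state spaces: S^h = S, Omega = S, S^de = 'I_T, S^l = S * Omega * S^de *)
Definition Sl (S : finType) (T : nat) : finType := (S * S * 'I_T)%type.

Definition Pde (T : nat) (d d' : 'I_T) : R := ((d' : nat) == (d.+1 %% T)%N)%:R.

(* low-level kernel induced by a high-level policy pi, pi (s, w) = pi(w|s) *)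
Definition Pl (S A : finType) (T : nat) (P : S -> A -> S -> R) (pi : S * S -> R)
  (sl : Sl S T) (a : A) (sl' : Sl S T) : R :=
  let: (s, w, d) := sl in
  let: (s', w', d') := sl' in
  Pde d d' * P s a s' *
  (if (d.+1 == T)%N then pi (s, w') else (w' == w)%:R).

(* max_{a} Q(s, a) over the finite action set (0 if A is empty; then irrelevant) *)
Definition maxA (X A : finType) (x : X * A -> R) (s : X) : R :=
  match [pick a : A] with
  | Some a0 => \big[Num.max/x (s, a0)]_(a : A) x (s, a)
  | None => 0
  end.

(* the vector field h(x, y) with x = vec(Q^l), y = vec(Q^h), pi^h = F y *)
Definition hfield (S A : finType) (T : nat) (P : S -> A -> S -> R)
  (r : Sl S T -> A -> R) (gamma : R) (F : (S * S -> R) -> (S * S -> R))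
  (y : S * S -> R) (x : Sl S T * A -> R) : Sl S T * A -> R :=
  fun p => let: (sl, a) := p in
    r sl a + gamma * (\sum_(sl' : Sl S T) Pl P (F y) sl a sl' * maxA x sl')
    - x (sl, a).

Definition is_solution (X : finType) (g : (X -> R) -> X -> R) (x : R -> X -> R) : Prop :=
  (forall i, continuous (fun t => x t i)) /\
  (forall t : R, 0 < t -> forall i, is_derive t 1 (fun s => x s i) (g (x t) i)).

Definition GAS_equilibrium (X : finType) (g : (X -> R) -> X -> R) (xs : X -> R) : Prop :=
  (forall i, g xs i = 0) /\
  (forall eps : R, 0 < eps -> exists2 delta : R, 0 < delta &
     forall x, is_solution g x -> supn (fun i => x 0 i - xs i) < delta ->
       forall t, 0 <= t -> supn (fun i => x t i - xs i) < eps) /\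
  (forall x, is_solution g x -> forall i, (x t i) @[t --> +oo] --> xs i).

End HRL.

From Pilot Require Import Defs.
From HB Require Import structures.
From mathcomp Require Import all_boot all_order all_algebra.
From mathcomp Require Import all_classical all_reals all_analysis.
From mathcomp Require Import lra ring.
Import Order.TTheory GRing.Theory Num.Theory.
Import numFieldNormedType.Exports.
Local Open Scope ring_scope.
Local Open Scope classical_set_scope.

(* For fixed y, h(x, y) = B x - x where the Bellman operator B of the low-level
   problem (driven by the policy F y) is a gamma-contraction in the sup norm: max is
   1-Lipschitz and P^l is a stochastic kernel.  Its fixed point lam y is the
   equilibrium.  Writing e = x - lam y for a solution x and k = (1 - gamma) / 2,
   the bound |e(t)| < c exp(-k t) propagates from t = 0 to all t >= 0: at a first
   failure time, the coordinate of e realising the sup norm would be shrinking faster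
   than the bound, so the bound would already fail just before.  Lipschitz continuity
   of lam follows from |x1 - x2| <= |B1 x2 - B2 x2| / (1 - gamma) for the fixed points
   of two contractions, since B depends on y only through F y, with a coefficient
   controlled by |lam y| <= |r| / (1 - gamma). *)

Section sup_norm.
Context {R : realType} {X : finType}.
Implicit Types f : X -> R.

Lemma supn_ge0 f : 0 <= supn f.
Proof. exact: bigmax_ge_id. Qed.

Lemma normr_le_supn f i : `|f i| <= supn f.
Proof. exact: (le_bigmax _ (fun i => `|f i|)). Qed.

Lemma supn_le f M : 0 <= M -> (forall i, `|f i| <= M) -> supn f <= M.
Proof. by move=> M0 fM; apply: bigmax_le. Qed.

Lemma supn_lt f M : 0 < M -> (forall i, `|f i| < M) -> supn f < M.
Proof. by move=> M0 fM; apply: bigmax_lt. Qed.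

Lemma supn_attained f (i0 : X) : exists i, supn f = `|f i|.
Proof.
have [i _ fi] :=
  @eq_bigmax _ _ X 0 i0 xpredT (fun i => `|f i|) isT (fun i _ => normr_ge0 _).
by exists i; rewrite /supn fi.
Qed.

Definition supn_lipschitz (B : (X -> R) -> X -> R) (q : R) : Prop :=
  forall x y, supn (fun i => B x i - B y i) <= q * supn (fun i => x i - y i).

End sup_norm.

Lemma bigmax_le_shift {R : realDomainType} {I : finType} (i0 : I) {f g : I -> R} {M : R} :
  (forall i, f i <= g i + M) ->
  \big[Num.max/f i0]_i f i <= \big[Num.max/g i0]_i g i + M.
Proof.
move=> fg; apply: bigmax_le => [|i _]; apply: le_trans (fg _) _; rewrite lerD2r.
  exact: bigmax_ge_id.
exact: (le_bigmax _ g).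
Qed.

Lemma normr_bigmaxB_le {R : realDomainType} (I : finType) (i0 : I) (f g : I -> R) M :
  (forall i, `|f i - g i| <= M) ->
  `|\big[Num.max/f i0]_i f i - \big[Num.max/g i0]_i g i| <= M.
Proof.
move=> fgM; have /all_and2[fg gf] : forall i, f i <= g i + M /\ g i <= f i + M.
  by move=> i; have := fgM i; rewrite ler_norml => /andP[]; split; lra.
have := bigmax_le_shift i0 fg; have := bigmax_le_shift i0 gf.
by rewrite ler_norml; lra.
Qed.

Lemma normr_convex_comb_le {R : realDomainType} (I : finType) (w m : I -> R) M :
  (forall i, 0 <= w i) -> \sum_i w i = 1 -> (forall i, `|m i| <= M) ->
  `|\sum_i w i * m i| <= M.
Proof.
move=> w0 w1 mM; apply: le_trans (ler_norm_sum _ _ _) _.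
rewrite -[leRHS]mul1r -w1 big_distrl /=.
by apply: ler_sum => i _; rewrite normrM ger0_norm // ler_wpM2l.
Qed.

(* ['rV[R]_n] is not inferred to be a complete normed module; this alias joins
   the two structures so that [banach_fixed_point] applies. *)
Definition rowvec (R : realType) n := 'rV[R]_n.
HB.instance Definition _ (R : realType) n :=
  NormedModule.copy (rowvec R n) ('rV[R]_n : normedModType R).
HB.instance Definition _ (R : realType) n :=
  Complete.copy (rowvec R n) ('rV[R]_n : completeType).

Section contraction.
Context {R : realType} {X : finType}.
Implicit Types (B : (X -> R) -> X -> R) (x : X -> R).

Let n := #|X|.
Let enc x : rowvec R n := \row_j x (enum_val j).
Let dec (v : rowvec R n) : X -> R := fun i => v ord0 (enum_rank i).

Let dec_enc x i : dec (enc x) i = x i.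
Proof. by rewrite /dec /enc mxE enum_rankK. Qed.

Let norm_encB x y : `|enc x - enc y| <= supn (fun i => x i - y i).
Proof.
change (mx_norm (enc x - enc y) <= supn (fun i => x i - y i)); rewrite mx_normrE.
apply: bigmax_le => [|[i j] _]; first exact: supn_ge0.
by rewrite /= !mxE; apply: (normr_le_supn (fun i => x i - y i)).
Qed.

Let supn_decB v w : supn (fun i => dec v i - dec w i) <= `|v - w|.
Proof.
apply: supn_le => [|i]; first exact: normr_ge0.
change (`|dec v i - dec w i| <= mx_norm (v - w)); rewrite mx_normrE.
have := le_bigmax 0 (fun ij : 'I_1 * 'I_n => `|(v - w) ij.1 ij.2|) (ord0, enum_rank i).
by rewrite /= !mxE.
Qed.

Lemma contraction_fixed_point {B q} : 0 <= q -> q < 1 -> supn_lipschitz B q ->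
  exists x, forall i, B x i = x i.
Proof.
move=> q0 q1 Bq.
pose f := totalfun_ setT (fun v => enc (B (dec v))).
have f_contr : is_contraction f.
  exists (NngNum q0); split => // -[v w] _ /=.
  apply: le_trans (norm_encB _ _) _; apply: le_trans (Bq _ _) _.
  by rewrite ler_wpM2l // supn_decB.
have [v _ vE] := banach_fixed_point f_contr closedT (ex_intro _ 0 I).
by exists (dec v) => i; rewrite [in RHS]vE /f /= /totalfun_ dec_enc.
Qed.

Lemma fixed_point_dist_le {B q x} z : 0 <= q -> q < 1 -> supn_lipschitz B q ->
  (forall i, B x i = x i) ->
  supn (fun i => x i - z i) <= supn (fun i => B z i - z i) / (1 - q).
Proof.
move=> q0 q1 Bq xE; set D := supn _; set E := supn _.
have D_le : D <= q * D + E.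
  apply: supn_le => [|i]; first by rewrite addr_ge0 ?mulr_ge0 ?supn_ge0.
  rewrite -{1}xE (_ : B x i - z i = (B x i - B z i) + (B z i - z i)); last by ring.
  apply: le_trans (ler_normD _ _) (lerD _ _).
    exact: le_trans (normr_le_supn (fun i => B x i - B z i) i) (Bq _ _).
  exact: (normr_le_supn (fun i => B z i - z i)).
by rewrite ler_pdivlMr ?subr_gt0 //; lra.
Qed.

Lemma fixed_point_supn_le {B q x M} : 0 <= q -> q < 1 -> supn_lipschitz B q ->
  (forall i, B x i = x i) -> 0 <= M -> (forall i, `|B (fun=> 0) i| <= M) ->
  supn x <= M / (1 - q).
Proof.
move=> q0 q1 Bq xE M0 B0M.
have Bx_le i : `|B x i - B (fun=> 0) i| <= q * supn x.
  apply: le_trans (normr_le_supn (fun i => B x i - B (fun=> 0) i) i) _.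
  by apply: le_trans (Bq _ _) _; under eq_fun do rewrite subr0.
have : supn x <= q * supn x + M.
  apply: supn_le => [|i]; first by rewrite addr_ge0 ?mulr_ge0 ?supn_ge0.
  rewrite -xE -[B x i](subrK (B (fun=> 0) i)).
  exact: le_trans (ler_normD _ _) (lerD (Bx_le i) (B0M i)).
by rewrite ler_pdivlMr ?subr_gt0 //; lra.
Qed.

End contraction.

Section real_analysis.
Context {R : realType}.

Lemma is_derive_lt0_left (f : R -> R) (t0 D : R) : is_derive t0 1 f D -> D < 0 ->
  forall d, 0 < d -> exists2 t, t0 - d < t < t0 & f t0 < f t.
Proof.
move=> [fd <-] D0 d d0.
have := cvgr_lt _ fd 0 D0; rewrite near_withinE => /(_ _)/nbhs_ballP[e /= e0 quot_lt0].
pose m := Num.min e d; pose h := - m / 2.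
have m0 : 0 < m by rewrite lt_min e0 d0.
have [me md] : m <= e /\ m <= d by rewrite !ge_min !lexx orbT.
have h_lt0 : h < 0 by rewrite /h; lra.
have h_ball : ball 0 e h by rewrite /ball /= sub0r normrN ltr0_norm // /h; lra.
have := quot_lt0 h h_ball (ltr0_neq0 h_lt0).
rewrite /GRing.scale /= mulr1 nmulr_rlt0 ?invr_lt0 // subr_gt0 => f_incr.
by exists (h + t0) => //; apply/andP; split; rewrite /h; lra.
Qed.

Lemma real_induction (P : R -> Prop) :
  P 0 ->
  (forall t, 0 <= t -> P t -> \forall s \near t, P s) ->
  (forall t, 0 < t -> (forall s, 0 <= s < t -> P s) -> P t) ->
  forall t, 0 <= t -> P t.
Proof.
move=> P0 P_open P_closed t t_ge0; apply: contrapT => NPt.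
pose bad := [set s | 0 <= s /\ ~ P s].
have bad_ne : bad !=set0 by exists t.
have bad_lb : has_lbound bad by exists 0 => s [].
pose t0 := inf bad.
have inf_le b : 0 <= b -> ~ P b -> t0 <= b by move=> b0 NPb; apply: ge_inf.
have t0_ge0 : 0 <= t0 by apply: lb_le_inf => // s [].
have Pt0 : P t0.
  move: t0_ge0; rewrite le_eqVlt => /predU1P[<- //|t0_gt0].
  apply: P_closed => // s /andP[s0 st0]; apply: contrapT => NPs.
  by have := inf_le s s0 NPs; rewrite leNgt st0.
have /nbhs_ballP[r /= r0 P_ball] := P_open t0 t0_ge0 Pt0.
suff : t0 + r <= t0 by lra.
apply: lb_le_inf => // b [b0 NPb]; rewrite leNgt; apply/negP => b_lt.
have t0b := inf_le b b0 NPb.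
by apply: NPb; apply: P_ball; rewrite /ball /= ler0_norm ?subr_le0 //; lra.
Qed.

Lemma is_derive_scaled_expR (c k t : R) :
  is_derive t 1 (fun s => c * expR (k * s)) (k * (c * expR (k * t))).
Proof.
have -> : k * (c * expR (k * t)) = c * (expR (k * t) * k) by ring.
have -> : (fun s => c * expR (k * s)) = c \*: (expR \o (k \*: id)) by [].
have := is_deriveZ c (is_derive1_comp (is_derive_expR _) (is_deriveZ k (is_derive_id t 1))).
by rewrite /GRing.scale /= mulr1.
Qed.

Lemma continuous_scaled_expR (c k : R) : continuous (fun s => c * expR (k * s)).
Proof.
move=> t; have [fd _] := is_derive_scaled_expR c k t.
by apply: differentiable_continuous; apply/derivable1_diffP.
Qed.

End real_analysis.

Section exponential_stability.
Context {R : realType} {X : finType}.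
Variables (B g : (X -> R) -> X -> R) (q : R) (xs : X -> R).
Hypotheses (q1 : q < 1) (Bq : supn_lipschitz B q) (B_xs : forall i, B xs i = xs i)
  (gE : forall x i, g x i = B x i - x i).

Let k := (1 - q) / 2.
Let k_gt0 : 0 < k. Proof. by rewrite divr_gt0 // subr_gt0. Qed.

Section decay.
Variables (x : R -> X -> R) (c : R).
Hypotheses (x_sol : is_solution g x) (x0_lt : supn (fun i => x 0 i - xs i) < c).

Let u s := c * expR (- k * s).
Let e s i := x s i - xs i.

Let u_gt0 s : 0 < u s.
Proof. by rewrite mulr_gt0 ?expR_gt0 // (le_lt_trans (supn_ge0 _) x0_lt). Qed.

Lemma decay_bound_open t : (forall i, `|e t i| < u t) ->
  \forall s \near t, forall i, `|e s i| < u s.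
Proof.
move=> e_lt; apply: (@filter_forall R X (fun i s => `|e s i| < u s) (nbhs t) _) => i.
have gap_cvg : (fun s => u s - `|e s i|) @ t --> u t - `|e t i|.
  apply: cvgB; first exact: continuous_scaled_expR.
  by apply: cvg_norm; apply: cvgB; [exact: x_sol.1 | exact: cvg_cst].
by apply: filterS (cvgr_gt _ gap_cvg 0 _) => [s|]; rewrite subr_gt0.
Qed.

Lemma decay_bound_closed t : 0 < t ->
  (forall s, 0 <= s < t -> forall i, `|e s i| < u s) -> forall i, `|e t i| < u t.
Proof.
move=> t_gt0 e_lt; apply: contrapT => /existsNP[j /negP]; rewrite -leNgt => u_le.
have [i V_eq] := supn_attained (e t) j; set V := supn (e t) in V_eq.
have uV : u t <= V := le_trans u_le (normr_le_supn _ j).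
pose sg := Num.sg (e t i).
have sgM_le_norm y : sg * y <= `|y|.
  apply: le_trans (ler_norm _) _; rewrite normrM normr_sg.
  by case: (_ != 0); rewrite ?mul1r ?mul0r.
pose f s := sg * e s i - u s.
have f_derive : is_derive t 1 f (sg * g (x t) i - - k * u t).
  suff : is_derive t 1 f (sg *: (g (x t) i - 0) - - k * u t) by rewrite subr0.
  have -> : f = sg \*: ((fun s => x s i) - cst (xs i)) - u by [].
  apply: is_deriveB; last exact: is_derive_scaled_expR.
  by apply: is_deriveZ; apply: is_deriveB; exact: x_sol.2.
have sgV : sg * e t i = V by rewrite /sg -normrEsg.
have ft_ge0 : 0 <= f t by rewrite /f sgV subr_ge0.
have f'_lt0 : sg * g (x t) i - - k * u t < 0.
  have BV : sg * (B (x t) i - B xs i) <= q * V.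
    apply: le_trans (sgM_le_norm _) _; apply: le_trans (Bq _ _).
    exact: (normr_le_supn (fun i => B (x t) i - B xs i)).
  have -> : g (x t) i = B (x t) i - B xs i - e t i by rewrite gE B_xs /e; ring.
  have gap1 : 0 <= (1 - q) * (V - u t) by rewrite mulr_ge0 // subr_ge0 // ltW.
  have gap2 : 0 < (1 - q) * u t by rewrite mulr_gt0 ?subr_gt0.
  by rewrite mulrBr sgV /k; lra.
have [s /andP[s_gt s_lt] fs_gt] := is_derive_lt0_left _ _ _ f_derive f'_lt0 _ t_gt0.
have s_ge0 : 0 <= s by rewrite subrr in s_gt; exact: ltW.
have := e_lt s; rewrite s_ge0 s_lt => /(_ isT i); have := sgM_le_norm (e s i).
by rewrite /f in fs_gt ft_ge0; lra.
Qed.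

Lemma solution_decay t : 0 <= t -> supn (fun i => x t i - xs i) < c * expR (- k * t).
Proof.
move=> t_ge0; apply: supn_lt; first exact: u_gt0.
move: t t_ge0; apply: real_induction.
- by move=> i; rewrite /u mulr0 expR0 mulr1; apply: le_lt_trans x0_lt; apply: normr_le_supn.
- by move=> t _; apply: decay_bound_open.
- exact: decay_bound_closed.
Qed.

End decay.

Lemma GAS_equilibrium_contraction : GAS_equilibrium g xs.
Proof.
split; first by move=> i; rewrite gE B_xs subrr.
split=> [eps eps_gt0|x x_sol i].
  exists eps => // x x_sol x0_lt t t_ge0.
  apply: lt_le_trans (solution_decay _ _ x_sol x0_lt _ t_ge0) _.
  by rewrite ger_pMr // expR_le1 mulNr oppr_le0 mulr_ge0 // ltW.
apply/cvgrPdist_lt => eps eps_gt0.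
pose c := supn (fun i => x 0 i - xs i) + 1.
have x0_lt : supn (fun i => x 0 i - xs i) < c by rewrite ltrDl.
have c_gt0 : 0 < c by apply: le_lt_trans x0_lt; apply: supn_ge0.
have ec_gt0 : 0 < eps / c by rewrite divr_gt0.
near=> t.
have t_ge0 : 0 <= t by near: t; apply: nbhs_pinfty_ge; rewrite num_real.
rewrite distrC; apply: le_lt_trans (normr_le_supn (fun i => x t i - xs i) i) _.
apply: lt_le_trans (solution_decay _ _ x_sol x0_lt _ t_ge0) _.
rewrite -ler_pdivlMl // [_^-1 * _]mulrC -(lnK ec_gt0) ler_expR mulNr lerNl.
rewrite -(ler_pdivrMl _ _ k_gt0).
by near: t; apply: nbhs_pinfty_ge; rewrite num_real.
Unshelve. all: by end_near.
Qed.

End exponential_stability.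

Section max_over_actions.
Context {R : realType} {Y A : finType}.
Implicit Types x : Y * A -> R.

Lemma maxA_dist x x' s : `|Defs.maxA x s - Defs.maxA x' s| <= supn (fun p => x p - x' p).
Proof.
rewrite /Defs.maxA; case: pickP => [a0 _|_]; last by rewrite subrr normr0 supn_ge0.
by apply: normr_bigmaxB_le => a; apply: (normr_le_supn (fun p => x p - x' p)).
Qed.

Lemma maxA0 s : Defs.maxA (fun _ : Y * A => 0 : R) s = 0.
Proof. by rewrite /Defs.maxA; case: pickP => [a0 _|//]; rewrite bigmax_eq_id. Qed.

Lemma normr_maxA_le x s : `|Defs.maxA x s| <= supn x.
Proof.
by have := maxA_dist x (fun=> 0) s; rewrite maxA0 subr0; under eq_fun do rewrite subr0.
Qed.

End max_over_actions.

Section low_level_kernel.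
Context {R : realType} {S A : finType} {T : nat}.
Variable P : S -> A -> S -> R.
Hypotheses (T_gt0 : (0 < T)%N) (P_ge0 : forall s a s', 0 <= P s a s')
  (P_sum1 : forall s a, \sum_s' P s a s' = 1).

Lemma Pde_ge0 (d d' : 'I_T) : 0 <= Pde R d d'.
Proof. by rewrite /Pde ler0n. Qed.

Lemma Pde_sum1 (d : 'I_T) : \sum_d' Pde R d d' = 1.
Proof.
rewrite (bigD1 (Ordinal (ltn_pmod d.+1 T_gt0))) //= big1 ?addr0 /Pde ?eqxx //.
by move=> d' d'_neq; have -> : ((d' : nat) == d.+1 %% T)%N = false by apply/negbTE.
Qed.

Definition option_kernel (pi : S * S -> R) (s w : S) (d : 'I_T) (w' : S) : R :=
  if (d.+1 == T)%N then pi (s, w') else (w' == w)%:R.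

Lemma PlE pi s w d a (sl' : Sl S T) :
  Pl P pi (s, w, d) a sl' =
  Pde R d sl'.2 * P s a sl'.1.1 * option_kernel pi s w d sl'.1.2.
Proof. by case: sl' => [[s' w'] d']. Qed.

Lemma sum_Pde_P s a (d : 'I_T) (phi : S -> R) :
  \sum_(sl' : Sl S T) Pde R d sl'.2 * P s a sl'.1.1 * phi sl'.1.2 = \sum_w phi w.
Proof.
rewrite -(pair_bigA _ (fun sw d' => Pde R d d' * P s a sw.1 * phi sw.2)) /=.
under eq_bigr do rewrite -!big_distrl /= Pde_sum1 mul1r.
rewrite -(pair_bigA _ (fun s' w => P s a s' * phi w)) /=.
by under eq_bigr do rewrite -big_distrr /=; rewrite -big_distrl /= P_sum1 mul1r.
Qed.

Section stochastic_policy.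
Variable pi : S * S -> R.
Hypotheses (pi_ge0 : forall s w, 0 <= pi (s, w)) (pi_sum1 : forall s, \sum_w pi (s, w) = 1).

Lemma Pl_ge0 (sl : Sl S T) a (sl' : Sl S T) : 0 <= Pl P pi sl a sl'.
Proof.
case: sl => [[s w] d]; rewrite PlE !mulr_ge0 ?Pde_ge0 // /option_kernel.
by case: ifP; rewrite ?ler0n.
Qed.

Lemma Pl_sum1 (sl : Sl S T) a : \sum_sl' Pl P pi sl a sl' = 1.
Proof.
case: sl => [[s w] d]; under eq_bigr do rewrite PlE.
rewrite sum_Pde_P /option_kernel; case: (d.+1 == T)%N; first exact: pi_sum1.
by rewrite (bigD1 w) //= eqxx big1 ?addr0 // => w' /negbTE ->.
Qed.

End stochastic_policy.
End low_level_kernel.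

Section bellman.
Context {R : realType} {S A : finType} {T : nat}.
Variables (P : S -> A -> S -> R) (r : Sl S T -> A -> R) (gamma : R).

Definition bellman (pi : S * S -> R) (x : Sl S T * A -> R) (p : Sl S T * A) : R :=
  r p.1 p.2 + gamma * \sum_sl' Pl P pi p.1 p.2 sl' * Defs.maxA x sl'.

Lemma hfield_bellman F y x p : hfield P r gamma F y x p = bellman (F y) x p - x p.
Proof. by case: p. Qed.

Lemma bellman0_le pi p : `|bellman pi (fun=> 0) p| <= supn (fun p => r p.1 p.2).
Proof.
rewrite /bellman; under eq_bigr do rewrite maxA0 mulr0.
by rewrite big1_eq mulr0 addr0; apply: (normr_le_supn (fun p => r p.1 p.2)).
Qed.

Hypotheses (T_gt0 : (0 < T)%N) (P_ge0 : forall s a s', 0 <= P s a s')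
  (P_sum1 : forall s a, \sum_s' P s a s' = 1) (gamma_ge0 : 0 <= gamma).

Lemma bellman_lipschitz pi : (forall s w, 0 <= pi (s, w)) ->
  (forall s, \sum_w pi (s, w) = 1) -> supn_lipschitz (bellman pi) gamma.
Proof.
move=> pi_ge0 pi_sum1 x x'; apply: supn_le => [|p]; first by rewrite mulr_ge0 ?supn_ge0.
rewrite /bellman opprD addrACA subrr add0r -mulrBr normrM ger0_norm // ler_wpM2l //.
rewrite -sumrB; under eq_bigr do rewrite -mulrBr.
apply: normr_convex_comb_le => [sl'||sl'].
- exact: Pl_ge0.
- exact: Pl_sum1.
- exact: maxA_dist.
Qed.

Lemma bellman_policy_dist pi1 pi2 x :
  supn (fun p => bellman pi1 x p - bellman pi2 x p) <=
  gamma * (#|S|%:R * supn x * supn (fun p => pi1 p - pi2 p)).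
Proof.
set M := supn x; set D := supn (fun p => pi1 p - pi2 p).
have [M0 D0] : 0 <= M /\ 0 <= D by rewrite !supn_ge0.
apply: supn_le => [|[[[s w] d] a]]; first by rewrite !mulr_ge0 ?ler0n.
rewrite /bellman opprD addrACA subrr add0r -mulrBr normrM ger0_norm // ler_wpM2l //.
rewrite -sumrB; under eq_bigr do rewrite -mulrBl !PlE -mulrBr.
apply: le_trans (ler_norm_sum _ _ _) _.
have kernelB_le w' : `|option_kernel pi1 s w d w' - option_kernel pi2 s w d w'| <= D.
  rewrite /option_kernel; case: ifP => _; last by rewrite subrr normr0.
  exact: (normr_le_supn (fun p => pi1 p - pi2 p)).
apply: le_trans (_ : _ <= \sum_(sl' : Sl S T) Pde R d sl'.2 * P s a sl'.1.1 * (D * M)) _.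
  apply: ler_sum => sl' _ /=.
  rewrite !normrM (ger0_norm (Pde_ge0 _ _)) (ger0_norm (P_ge0 _ _ _)) -mulrA.
  by rewrite ler_wpM2l ?mulr_ge0 ?Pde_ge0 // ler_pM ?normr_maxA_le.
rewrite (sum_Pde_P P T_gt0 P_sum1 s a d (fun=> D * M)) sumr_const.
by rewrite -[D * M *+ _]mulr_natl mulrA mulrAC.
Qed.

End bellman.

Theorem lemma1 (R : realType) (S A : finType) (T : nat) (hT : (0 < T)%N)
  (P : S -> A -> S -> R)
  (hP0 : forall s a s', 0 <= P s a s')
  (hP1 : forall s a, \sum_(s' : S) P s a s' = 1)
  (r : Sl S T -> A -> R) (gamma : R) (hgamma : 0 < gamma < 1)
  (F : (S * S -> R) -> (S * S -> R))
  (hF0 : forall Q s w, 0 <= F Q (s, w))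
  (hF1 : forall Q s, \sum_(w : S) F Q (s, w) = 1)
  (hFL : exists L : R, 0 <= L /\ forall Q1 Q2,
      supn (fun p => F Q1 p - F Q2 p) <= L * supn (fun p => Q1 p - Q2 p)) :
  exists lam : (S * S -> R) -> (Sl S T * A -> R),
    (forall y : S * S -> R, GAS_equilibrium (hfield P r gamma F y) (lam y)) /\
    (exists L : R, 0 <= L /\ forall y1 y2,
       supn (fun p => lam y1 p - lam y2 p) <= L * supn (fun p => y1 p - y2 p)).
Proof.
have [L [L_ge0 F_lip]] := hFL.
have /andP[/ltW gamma_ge0 gamma_lt1] := hgamma.
have B_lip y : supn_lipschitz (bellman P r gamma (F y)) gamma.
  exact: bellman_lipschitz (hF0 y) (hF1 y).
have /choice[lam lamE] : forall y, exists x, forall p, bellman P r gamma (F y) x p = x p.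
  by move=> y; apply: contraction_fixed_point gamma_ge0 gamma_lt1 (B_lip y).
exists lam; split=> [y|].
  apply: (GAS_equilibrium_contraction _ _ _ _ gamma_lt1 (B_lip y) (lamE y)).
  exact: hfield_bellman.
have [K K_ge0 lam_le] : exists2 K, 0 <= K & forall y, supn (lam y) <= K.
  exists (supn (fun p => r p.1 p.2) / (1 - gamma)) => [|y].
    by rewrite divr_ge0 ?supn_ge0 // subr_ge0 ltW.
  apply: fixed_point_supn_le gamma_ge0 gamma_lt1 (B_lip y) (lamE y) (supn_ge0 _) _.
  exact: bellman0_le.
exists (gamma * (#|S|%:R * K * L) / (1 - gamma)); split=> [|y1 y2].
  by rewrite divr_ge0 ?mulr_ge0 ?ler0n // subr_ge0 ltW.
apply: le_trans (fixed_point_dist_le _ gamma_ge0 gamma_lt1 (B_lip y1) (lamE y1)) _.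
under eq_fun => p do rewrite -[in X in _ - X](lamE y2 p).
rewrite mulrAC ler_pM2r ?invr_gt0 ?subr_gt0 //.
apply: le_trans (bellman_policy_dist P r gamma hT hP0 hP1 gamma_ge0 _ _ _) _.
by rewrite -!mulrA ler_wpM2l // ler_wpM2l ?ler0n // ler_pM ?supn_ge0 ?lam_le ?F_lip.
Qed.
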